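(* In the setting below, suppose Slater's condition $\sum_{j=1}^J\gamma_j\epsilon_j<C$ holds, and let $\mathcal{B}\subseteq\{1,\dots,J\}$ contain exactly $J-1$ indices, the remaining one being $j''$. Then under the allocation $\mathbf{R}^\ast(\mathcal{B})$ the variance constraint of portfolio $j''$ is satisfied, i.e. $\sigma^2_{\mathcal{D},j''}/r_{j''}+\sum_{i\in\mathcal{I}_{j''}}\sigma_i^2/R_i<V_{j''}$.
   Context: There are $J$ portfolios; portfolio $j$ has independent accounts $\mathcal{I}_j$ with standard deviations $\sigma_i>0$ and a dependent block $\mathcal{D}_j$ of $|\mathcal{D}_j|$ accounts whose total has standard deviation $\sigma_{\mathcal{D},j}\ge0$ ($\sigma_{\mathcal{D},j}\sqrt{|\mathcal{D}_j|}=0$ if $\mathcal{D}_j=\emptyset$). Budget $C>0$, variance bounds $V_j>0$. Let $\gamma_j=\sigma_{\mathcal{D},j}\sqrt{|\mathcal{D}_j|}+\sum_{i\in\mathcal{I}_j}\sigma_i>0$, $\epsilon_j=\gamma_j/V_j$, $\alpha(\mathcal{B})=\big(C-\sum_{j\in\mathcal{B}}\gamma_j\epsilon_j\big)/\sum_{j\notin\mathcal{B}}\gamma_j$, and $e_j(\mathcal{B})=\epsilon_j$ for $j\in\mathcal{B}$, $e_j(\mathcal{B})=\alpha(\mathcal{B})$ for $j\notin\mathcal{B}$. The allocation $\mathbf{R}^\ast(\mathcal{B})$ sets $R_i=\sigma_ie_j(\mathcal{B})$ for $i\in\mathcal{I}_j$ and the common realisation number $r_j=\frac{\sigma_{\mathcal{D},j}}{\sqrt{|\mathcal{D}_j|}}e_j(\mathcal{B})$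 for accounts of $\mathcal{D}_j$; it solves the stationarity equations of the Lagrangian of the problem of minimising $\sum_j(\sigma^2_{\mathcal{D},j}/r_j+\sum_{i\in\mathcal{I}_j}\sigma_i^2/R_i)$ over positive reals subject to $\sum_jr_j|\mathcal{D}_j|+\sum_iR_i=C$ and $\sigma^2_{\mathcal{D},j}/r_j+\sum_{i\in\mathcal{I}_j}\sigma_i^2/R_i\le V_j$, with the constraints in $\mathcal{B}$ active. Terms involving $r_j$ are absent when $\mathcal{D}_j=\emptyset$. *)

From HB Require Import structures.
From mathcomp Require Import all_boot all_order all_algebra.
Set Implicit Arguments. Unset Strict Implicit. Unset Printing Implicit Defensive.
Import Order.TTheory GRing.Theory Num.Theory.
Local Open Scope ring_scope.

Section Portfolios.
Variable R : rcfType.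
Variable J : nat.
(* portfolio j has nI j independent accounts with std devs @sI j i,
   and a dependent block of nD j accounts whose total has std dev sD j *)
Variable nI : 'I_J -> nat.
Variable sI : forall j : 'I_J, 'I_(nI j) -> R.
Variable nD : 'I_J -> nat.
Variable sD : 'I_J -> R.
Variable C : R.
Variable V : 'I_J -> R.

Definition gamma (j : 'I_J) : R :=
  sD j * Num.sqrt (nD j)%:R + \sum_(i < nI j) @sI j i.

Definition eps (j : 'I_J) : R := gamma j / V j.

Definition alpha (B : {set 'I_J}) : R :=
  (C - \sum_(j in B) gamma j * eps j) / \sum_(j | j \notin B) gamma j.

Definition e (B : {set 'I_J}) (j : 'I_J) : R :=
  if j \in B then eps j else alpha B.

Definition Rstar (B : {set 'I_J}) (j : 'I_J) (i : 'I_(nI j)) : R :=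
  @sI j i * e B j.
Definition rstar (B : {set 'I_J}) (j : 'I_J) : R :=
  sD j / Num.sqrt (nD j)%:R * e B j.

Definition port_var (r : 'I_J -> R) (Ri : forall j : 'I_J, 'I_(nI j) -> R)
  (j : 'I_J) : R :=
  (if nD j == 0%N then 0 else sD j ^+ 2 / r j)
  + \sum_(i < nI j) @sI j i ^+ 2 / Ri j i.

End Portfolios.

(* Under R*(B) every account of portfolio j is allotted a share proportional to
   its standard deviation, with the common factor e_j(B); hence the variance of
   portfolio j is exactly gamma_j / e_j(B), while its bound is V_j = gamma_j / eps_j.
   When B misses only j'', alpha(B) exceeds eps_j'' by the Slater slack
   C - sum_j gamma_j eps_j divided by gamma_j'', so the variance of j'' is
   strictly below V_j''. *)

From HB Require Import structures.
From mathcomp Require Import all_boot all_order all_algebra.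
From mathcomp Require Import ring.
Import Order.TTheory GRing.Theory Num.Theory.
Local Open Scope ring_scope.

Lemma eq_setC1_card (T : finType) (B : {set T}) (x : T) :
  x \notin B -> #|B| = #|T|.-1 -> B = [set~ x].
Proof.
move=> xNB cardB; apply/eqP; rewrite eqEcard cardsC1 cardB leqnn andbT.
by apply/subsetP => y yB; rewrite !inE; apply: contraNneq xNB => <-.
Qed.

Lemma sqrf_div_mul (F : fieldType) (x b : F) : x ^+ 2 / (x * b) = x / b.
Proof.
have [->|x_neq0] := eqVneq x 0; first by rewrite expr0n !mul0r.
by rewrite expr2 invfM mulrACA mulfV ?mul1r.
Qed.

Section Allocation.
Variables (R : rcfType) (J : nat) (nI : 'I_J -> nat).
Variables (sI : forall j : 'I_J, 'I_(nI j) -> R) (nD : 'I_J -> nat).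
Variables (sD : 'I_J -> R) (C : R) (V : 'I_J -> R).

(* Holds with no side condition: a zero share only produces zeros on both
   sides, because x / 0 = 0. *)
Lemma port_var_Rstar (B : {set 'I_J}) (j : 'I_J) :
  port_var sI nD sD (rstar sI nD sD C V B) (Rstar sI nD sD C V B) j
  = gamma sI nD sD j / e sI nD sD C V B j.
Proof.
rewrite /port_var /rstar /Rstar /gamma mulrDl mulr_suml; congr (_ + _).
  case: eqP => [->|_]; first by rewrite sqrtr0 mulr0 mul0r.
  by rewrite -mulrA sqrf_div_mul invfM invrK mulrA.
by apply: eq_bigr => i _; rewrite sqrf_div_mul.
Qed.

Lemma alpha_setC1 (j : 'I_J) : gamma sI nD sD j != 0 ->
  alpha sI nD sD C V [set~ j]
  = (C - \sum_(k < J) gamma sI nD sD k * eps sI nD sD V k) / gamma sI nD sD j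
    + eps sI nD sD V j.
Proof.
move=> gamma_neq0.
have notin_setC1 k : (k \notin [set~ j]) = (k == j) by rewrite !inE negbK.
rewrite /alpha (eq_bigl _ _ notin_setC1) big_pred1_eq.
rewrite [in RHS](bigD1 j) //= (eq_bigl _ _ (fun k => in_setC1 k j)).
by field.
Qed.

End Allocation.

Theorem lemma7 (R : rcfType) (J : nat) (nI : 'I_J -> nat)
  (sI : forall j : 'I_J, 'I_(nI j) -> R) (nD : 'I_J -> nat) (sD : 'I_J -> R)
  (C : R) (V : 'I_J -> R)
  (hsI : forall (j : 'I_J) (i : 'I_(nI j)), 0 < sI j i)
  (hsD : forall j, 0 <= sD j)
  (hC : 0 < C) (hV : forall j, 0 < V j)
  (hgamma : forall j, 0 < gamma sI nD sD j)
  (slater : \sum_(j < J) gamma sI nD sD j * eps sI nD sD V j < C)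
  (B : {set 'I_J}) (j'' : 'I_J)
  (hB : #|B| = J.-1) (hj : j'' \notin B) :
  port_var sI nD sD (rstar sI nD sD C V B) (Rstar sI nD sD C V B) j''
    < V j''.
Proof.
have -> : B = [set~ j''] by apply: eq_setC1_card; rewrite ?card_ord.
have gamma_gt0 := hgamma j''; have V_gt0 := hV j''.
have eps_gt0 : 0 < eps sI nD sD V j'' by rewrite divr_gt0.
have eps_lt_alpha : eps sI nD sD V j'' < alpha sI nD sD C V [set~ j''].
  by rewrite alpha_setC1 ?gt_eqF // ltrDr divr_gt0 // subr_gt0.
rewrite port_var_Rstar /e setC11 -[V j''](divKf (lt0r_neq0 gamma_gt0)).
rewrite (ltr_pM2l gamma_gt0) ltf_pV2 ?posrE //.
exact: lt_trans eps_gt0 eps_lt_alpha.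
Qed.
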